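(* Consider the problem $\min_{x\in\mathbb{R}^n} F(x):=f(x)+g(x)$ subject to $Ax=b$, under the setting described in the context, with optimal solution $x^*$ and with $\lambda^*$ an optimal solution of $\max_\lambda d(\lambda)$ such that $d(\lambda^* )=F(x^* )$. Let $\{x^k\}$ and $\{\lambda^k\}$ be generated by the IAL framework described in the context with $\eta_k=\frac{\sigma}{k^2}$ for some constant $\sigma>0$. Then, with $\delta_k:=d(\lambda^* )-d(\lambda^k)$, $$\delta_k=\mathcal{O}\!\left(\frac1k\right),\qquad \|Ax^{k+1}-b\|^2=\mathcal{O}\!\left(\frac1k\right),\qquad |F(x^{k+1})-F(x^* )|=\mathcal{O}\!\left(\frac1{\sqrt k}\right).$$
   Context: Let $A\in\mathbb{R}^{m\times n}$ and $b\in\mathbb{R}^m$. Let $f:\mathbb{R}^n\to\mathbb{R}$ be convex and differentiable with Lipschitz continuous gradient. Let $g:\mathbb{R}^n\to\mathbb{R}\cup\{+\infty\}$ be a closed proper convex (possibly nonsmooth) function with bounded domain, and $F=f+g$. Fix a penalty parameter $\beta>0$. For $\lambda\in\mathbb{R}^m$, define $$\hat f_\beta(x;\lambda):=f(x)+\langle\lambda,Ax-b\rangle+\tfrac{\beta}{2}\|Ax-b\|^2,\qquad \mathcal{L}_\beta(x;\lambda):=\hat f_\beta(x;\lambda)+g(x),$$ and $d(\lambda):=\min_{x\in\mathbb{R}^n}\mathcal{L}_\beta(x;\lambda)$. Here $\nabla\hat f_\beta(x;\lambda)$ denotes the gradient of $\hat f_\beta$ with respect to $x$. It is assumed that strong duality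 holds between the problem and its augmented Lagrangian dual $\max_\lambda d(\lambda)$. IAL framework: choose $x^1\in\operatorname{dom} g$, $\lambda^1\in\mathbb{R}^m$, and a nonnegative sequence $\{\eta_k\}$. For $k=1,2,\dots$: find a point $x^{k+1}$ such that $$\max_{x\in\mathbb{R}^n}\Big\{\langle\nabla\hat f_\beta(x^{k+1};\lambda^k),\,x^{k+1}-x\rangle+g(x^{k+1})-g(x)\Big\}\le\eta_k,$$ and then set $\lambda^{k+1}=\lambda^k+\beta(Ax^{k+1}-b)$. *)

From HB Require Import structures.
From mathcomp Require Import all_boot all_order all_algebra.
From mathcomp Require Import all_classical all_reals all_analysis.
Set Implicit Arguments. Unset Strict Implicit. Unset Printing Implicit Defensive.
Import Order.TTheory GRing.Theory Num.Theory.
Import numFieldNormedType.Exports.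
Local Open Scope classical_set_scope.
Local Open Scope ring_scope.

Section Defs.
Variable R : realType.

Definition vdot n (u v : 'cV[R]_n) : R := \sum_(i < n) u i 0 * v i 0.
Definition vnorm n (u : 'cV[R]_n) : R := Num.sqrt (vdot u u).

Definition convex_fun n (f : 'cV[R]_n -> R) : Prop :=
  forall (x y : 'cV[R]_n) (t : R), 0 <= t <= 1 ->
    f (t *: x + (1 - t) *: y) <= t * f x + (1 - t) * f y.

Definition has_gradient n (f : 'cV[R]_n -> R) (gf : 'cV[R]_n -> 'cV[R]_n) : Prop :=
  forall x : 'cV[R]_n, differentiable f x /\ forall h, 'd f x h = vdot (gf x) h.

Definition lipschitz_map n (gf : 'cV[R]_n -> 'cV[R]_n) : Prop :=
  exists L : R, forall x y, vnorm (gf x - gf y) <= L * vnorm (x - y).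

Definition proper_efun n (g : 'cV[R]_n -> \bar R) : Prop :=
  (forall x, g x != -oo%E) /\ exists x, (g x < +oo)%E.

Definition convex_efun n (g : 'cV[R]_n -> \bar R) : Prop :=
  forall (x y : 'cV[R]_n) (t : R), 0 <= t <= 1 ->
    (g x < +oo)%E -> (g y < +oo)%E ->
    (g (t *: x + (1 - t) *: y)%R <= t%:E * g x + (1 - t)%:E * g y)%E.

Definition closed_efun n (g : 'cV[R]_n -> \bar R) : Prop :=
  closed [set p : 'cV[R]_n * R | (g p.1 <= p.2%:E)%E].

Definition bounded_dom n (g : 'cV[R]_n -> \bar R) : Prop :=
  exists M : R, forall x, (g x < +oo)%E -> vnorm x <= M.

Definition Fobj n (f : 'cV[R]_n -> R) (g : 'cV[R]_n -> \bar R) (x : 'cV[R]_n) : \bar R :=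
  ((f x)%:E + g x)%E.

Definition fhat m n (f : 'cV[R]_n -> R) (A : 'M[R]_(m, n)) (b : 'cV[R]_m)
  (beta : R) (lam : 'cV[R]_m) (x : 'cV[R]_n) : R :=
  f x + vdot lam (A *m x - b) + beta / 2 * vdot (A *m x - b) (A *m x - b).

Definition grad_fhat m n (gf : 'cV[R]_n -> 'cV[R]_n) (A : 'M[R]_(m, n)) (b : 'cV[R]_m)
  (beta : R) (lam : 'cV[R]_m) (x : 'cV[R]_n) : 'cV[R]_n :=
  gf x + A^T *m lam + beta *: (A^T *m (A *m x - b)).

Definition augLag m n (f : 'cV[R]_n -> R) (g : 'cV[R]_n -> \bar R) (A : 'M[R]_(m, n))
  (b : 'cV[R]_m) (beta : R) (lam : 'cV[R]_m) (x : 'cV[R]_n) : \bar R :=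
  ((fhat f A b beta lam x)%:E + g x)%E.

Definition dualfun m n (f : 'cV[R]_n -> R) (g : 'cV[R]_n -> \bar R) (A : 'M[R]_(m, n))
  (b : 'cV[R]_m) (beta : R) (lam : 'cV[R]_m) : \bar R :=
  ereal_inf (range (augLag f g A b beta lam)).

(* the IAL framework: x^1 in dom g, and for k >= 1 the inexact step and
   multiplier update; the "max_x {...} <= eta_k" is written as "for all x". *)
Definition IAL_iterates m n (f : 'cV[R]_n -> R) (gf : 'cV[R]_n -> 'cV[R]_n)
  (g : 'cV[R]_n -> \bar R) (A : 'M[R]_(m, n)) (b : 'cV[R]_m) (beta : R)
  (eta : nat -> R) (x : nat -> 'cV[R]_n) (lam : nat -> 'cV[R]_m) : Prop :=
  (g (x 1%N) < +oo)%E /\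
  forall k : nat, (1 <= k)%N ->
    (forall z : 'cV[R]_n,
       ((vdot (grad_fhat gf A b beta (lam k) (x k.+1)) (x k.+1 - z)%R)%:E
          + g (x k.+1) - g z <= (eta k)%:E)%E) /\
    lam k.+1 = lam k + beta *: (A *m x k.+1 - b).

End Defs.

From HB Require Import structures.
From mathcomp Require Import all_boot all_order all_algebra.
From mathcomp Require Import all_classical all_reals all_analysis.
From mathcomp Require Import ring lra.
Import Order.TTheory GRing.Theory Num.Theory.
Import numFieldNormedType.Exports.
Local Open Scope classical_set_scope.
Local Open Scope ring_scope.

(* The approximate optimality condition for x^{k+1}, combined with the gradient
   inequality for f, makes x^{k+1} an eta_k-minimizer both of the augmented
   Lagrangian at lambda^k and of the ordinary Lagrangian at lambda^{k+1}.  With the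
   residual r_k = A x^{k+1} - b, the dual gap delta_k and the multiplier distance
   a_k = |lambda* - lambda^k|^2 / (2 beta), this yields the two recursions
     delta_{k+1} <= delta_k - beta/2 |r_k|^2 + eta_k,
     delta_{k+1} <= a_k - a_{k+1} + eta_k.
   As eta_k is summable, the second one keeps a_k bounded, and together they make
   the potential k(k+1)/2 delta_{k+1} + k a_{k+1} grow at most linearly: hence
   delta_k = O(1/k) and |r_k|^2 = O(1/k).  The primal gap |F(x^{k+1}) - d(lambda* )|
   is at most |<lambda^k, r_k>| + |<lambda*, r_k>| + beta/2 |r_k|^2 + eta_k, and
   the multipliers stay bounded, so it is O(1/sqrt k) by Young's inequality. *)

Set Implicit Arguments. Unset Strict Implicit.

Section Vdot.
Variables (R : realType) (k : nat).
Implicit Types (u v w : 'cV[R]_k) (a t : R).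

Lemma vdotC u v : vdot u v = vdot v u.
Proof. by apply: eq_bigr => i _; rewrite mulrC. Qed.

Lemma vdotDl u v w : vdot (u + v) w = vdot u w + vdot v w.
Proof. by rewrite /vdot -big_split; apply: eq_bigr => i _; rewrite !mxE mulrDl. Qed.

Lemma vdotNl u w : vdot (- u) w = - vdot u w.
Proof. by rewrite /vdot -sumrN; apply: eq_bigr => i _; rewrite !mxE mulNr. Qed.

Lemma vdotZl a u w : vdot (a *: u) w = a * vdot u w.
Proof. by rewrite /vdot mulr_sumr; apply: eq_bigr => i _; rewrite !mxE mulrA. Qed.

Lemma vdotBl u v w : vdot (u - v) w = vdot u w - vdot v w.
Proof. by rewrite vdotDl vdotNl. Qed.

Lemma vdotDr u v w : vdot w (u + v) = vdot w u + vdot w v.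
Proof. by rewrite vdotC vdotDl !(vdotC w). Qed.

Lemma vdotNr u w : vdot w (- u) = - vdot w u.
Proof. by rewrite vdotC vdotNl vdotC. Qed.

Lemma vdotZr a u w : vdot w (a *: u) = a * vdot w u.
Proof. by rewrite vdotC vdotZl vdotC. Qed.

Lemma vdotBr u v w : vdot w (u - v) = vdot w u - vdot w v.
Proof. by rewrite vdotDr vdotNr. Qed.

Lemma vdot_ge0 u : 0 <= vdot u u.
Proof. by apply: sumr_ge0 => i _; rewrite -expr2 sqr_ge0. Qed.

Lemma vdot_sqrB u v : vdot (u - v) (u - v) = vdot u u - 2 * vdot u v + vdot v v.
Proof. by rewrite !(vdotBl, vdotBr) (vdotC v u); ring. Qed.

Lemma vdot_le_sqrB u v : vdot v v <= 2 * vdot u u + 2 * vdot (u - v) (u - v).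
Proof.
have := vdot_ge0 (2 *: u - v).
by rewrite vdot_sqrB vdot_sqrB !(vdotZl, vdotZr); lra.
Qed.

Lemma vdot_young u v t : 0 < t -> 2 * `|vdot u v| <= t * vdot u u + vdot v v / t.
Proof.
move=> t_gt0.
have young w : 2 * vdot w v <= t * vdot w w + vdot v v / t.
  have := vdot_ge0 (t *: w - v); rewrite vdot_sqrB !(vdotZl, vdotZr).
  have -> : t * vdot w w + vdot v v / t = (t * (t * vdot w w) + vdot v v) / t.
    by field; rewrite gt_eqF.
  by rewrite ler_pdivlMr //; lra.
have [uv_ge0|uv_le0] := lerP 0 (vdot u v).
  by rewrite ger0_norm //; apply: young.
by rewrite ltr0_norm //; have := young (- u); rewrite !(vdotNl, vdotNr) opprK.
Qed.

Lemma vdot_young_sqrt u v (K : R) : 0 < K ->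
  2 * `|vdot u v| <= (vdot u u + K * vdot v v) / Num.sqrt K.
Proof.
move=> K_gt0; have sK_gt0 : 0 < Num.sqrt K by rewrite sqrtr_gt0.
have Ksq : K = Num.sqrt K ^+ 2 by rewrite sqr_sqrtr // ltW.
set s := Num.sqrt K in sK_gt0 Ksq *.
have -> : (vdot u u + K * vdot v v) / s = s^-1 * vdot u u + vdot v v / s^-1.
  by rewrite invrK Ksq; field; rewrite gt_eqF.
by apply: vdot_young; rewrite invr_gt0.
Qed.

End Vdot.

Lemma vdot_trmx (R : realType) p q (M : 'M[R]_(p, q)) (u : 'cV[R]_p) (v : 'cV[R]_q) :
  vdot (M^T *m u) v = vdot u (M *m v).
Proof.
rewrite /vdot; under eq_bigr do rewrite !mxE big_distrl /=.
rewrite exchange_big /=; apply: eq_bigr => i _; rewrite !mxE big_distrr /=.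
by apply: eq_bigr => j _; rewrite !mxE; ring.
Qed.

Lemma convex_gradient_le (R : realType) n (f : 'cV[R]_n -> R) gf :
  convex_fun f -> has_gradient f gf -> forall x z, f x + vdot (gf x) (z - x) <= f z.
Proof.
move=> f_convex f_grad x z; set h := z - x.
have [df_x dfE] := f_grad x.
have quot_cvg : (fun t : R => t^-1 *: ((f \o shift x) (t *: h) - f x)) @ 0^'+
    --> vdot (gf x) h.
  by rewrite -dfE -deriveE //; apply/cvg_dnbhs_at_right/diff_derivable.
rewrite addrC -lerBrDr; apply: (cvgr_to_le quot_cvg); near=> t.
have t_gt0 : 0 < t by near: t; exact: nbhs_right_gt.
have t_lt1 : t < 1 by near: t; exact: nbhs_right_lt.
have := f_convex z x t; rewrite (ltW t_gt0) (ltW t_lt1) => /(_ isT).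
have -> : t *: z + (1 - t) *: x = t *: h + x.
  by rewrite /h scalerBr scalerBl scale1r addrCA addrC.
by move=> f_le; rewrite /= ler_pdivrMl //; lra.
Unshelve. all: by end_near.
Qed.

Lemma EFin_le_addr (R : realType) (a c : R) (y : \bar R) : y != -oo%E ->
  (forall r, y = r%:E -> a <= c + r) -> (a%:E <= c%:E + y)%E.
Proof. by case: y => [r _ /(_ r erefl)| _ _ |] //=; rewrite leey. Qed.

Lemma dualfun_le_augLag (R : realType) m n f g (A : 'M[R]_(m, n)) b beta l z :
  (dualfun f g A b beta l <= augLag f g A b beta l z)%E.
Proof. by apply: ereal_inf_lbound; exists z. Qed.

Lemma dualfun_ge (R : realType) m n f g (A : 'M[R]_(m, n)) b beta l (a : R) :
  (forall z, (a%:E <= augLag f g A b beta l z)%E) -> (a%:E <= dualfun f g A b beta l)%E.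
Proof. by move=> a_le; apply: le_ereal_inf_tmp => _ [z _ <-]. Qed.

Section ApproximateMinimizer.
Variables (R : realType) (m n : nat) (A : 'M[R]_(m, n)) (b : 'cV[R]_m).
Variables (f : 'cV[R]_n -> R) (gf : 'cV[R]_n -> 'cV[R]_n) (g : 'cV[R]_n -> \bar R).
Variables (beta eta : R) (l : 'cV[R]_m) (y : 'cV[R]_n).
Hypothesis f_convex : convex_fun f.
Hypothesis f_grad : has_gradient f gf.
Hypothesis beta_ge0 : 0 <= beta.
Hypothesis g_ninfty : forall z, g z != -oo%E.
Hypothesis y_approx : forall z,
  ((vdot (grad_fhat gf A b beta l y) (y - z))%:E + g y - g z <= eta%:E)%E.

Local Notation r := (A *m y - b).
Local Notation l' := (l + beta *: r).

Lemma approx_minimizer_fin_num z : (g z < +oo)%E -> g y \is a fin_num.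
Proof.
move=> gz_lt; have := y_approx z; have := g_ninfty z; have := g_ninfty y.
case: (g y) => [//| _ _ |//]; case: (g z) gz_lt => [gz _|//|//].
by rewrite /= leNgt ltey.
Qed.

Variable gy : R.
Hypothesis gyE : g y = gy%:E.

Lemma lagrangian_approx_le z gz : g z = gz%:E ->
  f y + gy + vdot l' r - eta <= f z + gz + vdot l' (A *m z - b).
Proof.
move=> gzE; have := y_approx z; rewrite gyE gzE -EFinN -!EFinD lee_fin.
have := convex_gradient_le f_convex f_grad y z.
have -> : y - z = - (z - y) by rewrite opprB.
rewrite /grad_fhat 2!vdotDl vdotZl !vdot_trmx.
have -> : A *m - (z - y) = r - (A *m z - b) by rewrite mulmxN mulmxBr !opprB addrA subrK.
move: (A *m y - b) (A *m z - b) => r s.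
rewrite !(vdotBr, vdotNr, vdotDl, vdotZl); lra.
Qed.

Lemma augLag_approx_le z gz : g z = gz%:E ->
  fhat f A b beta l y + gy - eta <= fhat f A b beta l z + gz.
Proof.
move=> gzE; have := lagrangian_approx_le gzE.
have := mulr_ge0 beta_ge0 (vdot_ge0 ((A *m y - b) - (A *m z - b))).
rewrite /fhat vdot_sqrB; move: (A *m y - b) (A *m z - b) => r s.
rewrite !(vdotDl, vdotZl); lra.
Qed.

Lemma dualfun_approx_ge :
  ((fhat f A b beta l y + gy - eta)%:E <= dualfun f g A b beta l)%E.
Proof.
apply: dualfun_ge => z; apply: EFin_le_addr (g_ninfty z) _ => gz.
exact: augLag_approx_le.
Qed.

Lemma dualfun_next_approx_ge :
  ((f y + gy + vdot l' r - eta)%:E <= dualfun f g A b beta l')%E.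
Proof.
apply: dualfun_ge => z; apply: EFin_le_addr (g_ninfty z) _ => gz gzE.
have := lagrangian_approx_le gzE.
have := mulr_ge0 beta_ge0 (vdot_ge0 (A *m z - b)).
rewrite /fhat; lra.
Qed.

End ApproximateMinimizer.

Section GapRecursion.
Variables (R : realType) (sigma : R) (del a s : nat -> R).
Hypothesis sigma_ge0 : 0 <= sigma.
Hypothesis del_ge0 : forall k, (1 <= k)%N -> 0 <= del k.
Hypothesis a_ge0 : forall k, 0 <= a k.
Hypothesis s_ge0 : forall k, 0 <= s k.
Hypothesis del_descent : forall k, (1 <= k)%N ->
  del k.+1 <= del k - s k + sigma / k%:R ^+ 2.
Hypothesis del_fejer : forall k, (1 <= k)%N ->
  del k.+1 <= a k - a k.+1 + sigma / k%:R ^+ 2.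

Lemma fejer_bounded k : (1 <= k)%N -> a k <= a 1 + 2 * sigma.
Proof.
have step j : (1 <= j)%N -> a j.+1 + 2 * sigma / j.+1%:R <= a j + 2 * sigma / j%:R.
  move=> j_ge1; have J1 : 1 <= j%:R :> R by rewrite ler1n.
  have J0 : 0 < j%:R :> R by lra.
  have tail : sigma / j%:R ^+ 2 + 2 * sigma / (j%:R + 1) <= 2 * sigma / j%:R.
    rewrite -subr_ge0.
    have -> : 2 * sigma / j%:R - (sigma / j%:R ^+ 2 + 2 * sigma / (j%:R + 1)) =
              sigma * (j%:R - 1) / (j%:R ^+ 2 * (j%:R + 1)).
      by field; rewrite !gt_eqF // ltr_wpDl.
    apply: divr_ge0; first by rewrite mulr_ge0 // subr_ge0.
    by rewrite mulr_ge0 ?sqr_ge0 // addr_ge0 // ltW.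
  have := del_fejer j_ge1; have := del_ge0 (ltn0Sn j).
  by rewrite -[j.+1%:R]natr1; lra.
have mono j : (1 <= j)%N -> a j + 2 * sigma / j%:R <= a 1 + 2 * sigma.
  elim: j => // -[_ _|j IH _]; first by rewrite divr1.
  exact: le_trans (step _ (ltn0Sn _)) (IH isT).
move=> k_ge1; have := mono k k_ge1.
have : 0 <= 2 * sigma / k%:R by rewrite divr_ge0 // mulr_ge0.
lra.
Qed.

Lemma gap_potential_le M :
  M%:R * (M%:R + 1) / 2 * del M.+1 + M%:R * a M.+1 <= M%:R * (a 1 + 3 * sigma).
Proof.
elim: M => [|M IH]; first by rewrite !mul0r !add0r.
have := fejer_bounded (ltn0Sn M); move: IH.
have descent := del_descent (ltn0Sn M); have fejer := del_fejer (ltn0Sn M).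
have := s_ge0 M.+1; move: descent fejer.
rewrite -[M.+1%:R]natr1; set K : R := M%:R; have K_ge0 : 0 <= K by [].
set e := sigma / (K + 1) ^+ 2 => descent fejer s_ge0'.
have weights : (K * (K + 1) / 2 + (K + 1)) * e <= sigma.
  rewrite /e -subr_ge0.
  have -> : sigma - (K * (K + 1) / 2 + (K + 1)) * e = sigma * K / (2 * (K + 1)).
    by rewrite /e; field; rewrite gt_eqF // ltr_wpDl.
  by rewrite divr_ge0 // mulr_ge0 // addr_ge0.
have w1 : 0 <= K * (K + 1) / 2 by rewrite divr_ge0 // mulr_ge0 // addr_ge0.
have descent_e : del M.+2 <= del M.+1 + e by lra.
have := ler_wpM2l w1 descent_e.
have := ler_wpM2l (addr_ge0 K_ge0 ler01) fejer.
lra.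
Qed.

Lemma gap_rate k : (2 <= k)%N -> k%:R * del k <= 2 * (a 1 + 3 * sigma).
Proof.
case: k => [|[|M]] // _; have := gap_potential_le M.+1.
have := mulr_ge0 (ler0n R M.+1) (a_ge0 M.+2).
rewrite -[M.+2%:R]natr1; set K : R := M.+1%:R; set c := a 1 + 3 * sigma => Ka_ge0 pot.
have K_gt0 : 0 < K by rewrite ltr0n.
have : K * ((K + 1) / 2 * del M.+2) <= K * c by lra.
by rewrite ler_pM2l //; lra.
Qed.

Lemma gap_residual_rate k : (2 <= k)%N ->
  k%:R * del k <= 2 * (a 1 + 3 * sigma) /\ k%:R * s k <= 2 * (a 1 + 3 * sigma) + sigma.
Proof.
move=> k_ge2; split; first exact: gap_rate.
have k_ge1 : (1 <= k)%N by exact: ltnW.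
have K_gt0 : 0 < k%:R :> R by rewrite ltr0n.
have K_ge1 : 1 <= k%:R :> R by rewrite ler1n.
have tail : k%:R * (sigma / k%:R ^+ 2) <= sigma.
  have -> : k%:R * (sigma / k%:R ^+ 2) = sigma / k%:R by field; rewrite gt_eqF.
  by rewrite ler_pdivrMr // ler_peMr.
have s_le : s k <= del k + sigma / k%:R ^+ 2.
  by have := del_descent k_ge1; have := del_ge0 (ltn0Sn k); lra.
have := ler_wpM2l (ltW K_gt0) s_le; have := gap_rate k_ge2; lra.
Qed.

End GapRecursion.

Lemma EFin_fine_between (R : realType) (a c : R) (y : \bar R) :
  (a%:E <= y)%E -> (y <= c%:E)%E -> y = (fine y)%:E.
Proof. by case: y. Qed.

Lemma ler_div_sqrt (R : realType) (K X : R) : 1 <= K -> 0 <= X -> X / K <= X / Num.sqrt K.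
Proof.
move=> K_ge1 X_ge0; have K_gt0 : 0 < K by rewrite (lt_le_trans ltr01).
have sK_ge1 : 1 <= Num.sqrt K by rewrite -sqrtr1 ler_sqrt // ltW.
have sK_sq : Num.sqrt K * Num.sqrt K = K by rewrite -expr2 sqr_sqrtr // ltW.
have sK_le : Num.sqrt K <= K by nra.
by rewrite ler_wpM2l // lef_pV2 ?posrE // (lt_le_trans ltr01).
Qed.

Section IAL.
Variables (R : realType) (m n : nat) (A : 'M[R]_(m, n)) (b : 'cV[R]_m).
Variables (f : 'cV[R]_n -> R) (gf : 'cV[R]_n -> 'cV[R]_n) (g : 'cV[R]_n -> \bar R).
Variables (beta sigma : R) (lamstar : 'cV[R]_m).
Variables (x : nat -> 'cV[R]_n) (lam : nat -> 'cV[R]_m).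
Hypothesis f_convex : convex_fun f.
Hypothesis f_grad : has_gradient f gf.
Hypothesis g_ninfty : forall z, g z != -oo%E.
Hypothesis beta_gt0 : 0 < beta.
Hypothesis sigma_gt0 : 0 < sigma.
Hypothesis lamstar_max : forall l,
  (dualfun f g A b beta l <= dualfun f g A b beta lamstar)%E.
Hypothesis iterates : IAL_iterates f gf g A b beta (fun k => sigma / (k%:R ^+ 2)) x lam.

Local Notation D := (dualfun f g A b beta).
Local Notation eta k := (sigma / k%:R ^+ 2).
Local Notation r k := (A *m x k.+1 - b).
Local Notation gx k := (fine (g (x k.+1))).
Local Notation Fx k := (f (x k.+1) + gx k).
Local Notation Lx l k := (fhat f A b beta l (x k.+1) + gx k).
Local Notation d k := (fine (D (lam k))).
Local Notation dstar := (fine (D lamstar)).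

Lemma iterate_g_fin k : (1 <= k)%N -> g (x k.+1) = (gx k)%:E.
Proof.
move=> k_ge1; have [approx _] := iterates.2 k k_ge1.
by rewrite fineK // (approx_minimizer_fin_num g_ninfty approx iterates.1).
Qed.

Lemma multiplier_update k : (1 <= k)%N -> lam k.+1 = lam k + beta *: r k.
Proof. by move=> k_ge1; have [] := iterates.2 k k_ge1. Qed.

Lemma dual_iterate_bounds k : (1 <= k)%N ->
  [/\ forall l, (D l <= (Lx l k)%:E)%E, ((Lx (lam k) k - eta k)%:E <= D (lam k))%E
    & ((Fx k + vdot (lam k.+1) (r k) - eta k)%:E <= D (lam k.+1))%E].
Proof.
move=> k_ge1; have [/= approx _] := iterates.2 k k_ge1.
have gxE := iterate_g_fin k_ge1; have beta_ge0 := ltW beta_gt0.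
split=> [l||]; first by rewrite EFinD -gxE; exact: dualfun_le_augLag.
  exact (dualfun_approx_ge f_convex f_grad beta_ge0 g_ninfty approx gxE).
rewrite multiplier_update //.
exact (dualfun_next_approx_ge f_convex f_grad beta_ge0 g_ninfty approx gxE).
Qed.

Lemma dual_iterate_fin k : (1 <= k)%N -> D (lam k) = (d k)%:E.
Proof. by move=> /dual_iterate_bounds[D_le D_ge _]; exact: EFin_fine_between D_ge (D_le _). Qed.

Lemma dual_opt_fin : D lamstar = dstar%:E.
Proof.
have [D_le D1_ge _] := dual_iterate_bounds (ltnSn 0).
exact: EFin_fine_between (le_trans D1_ge (lamstar_max _)) (D_le _).
Qed.

Lemma dual_iterate_le_opt k : (1 <= k)%N -> d k <= dstar.
Proof. by move=> k_ge1; rewrite -lee_fin -dual_opt_fin -dual_iterate_fin. Qed.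

Local Notation del k := (dstar - d k).
Local Notation s k := (beta / 2 * vdot (r k) (r k)).
Local Notation a k := (vdot (lamstar - lam k) (lamstar - lam k) / (2 * beta)).

Lemma dual_iterate_real_bounds k : (1 <= k)%N ->
  [/\ d k <= Lx (lam k) k, Lx (lam k) k - eta k <= d k,
      Fx k + vdot (lam k) (r k) + 2 * s k - eta k <= d k.+1
    & dstar <= Lx lamstar k].
Proof.
move=> k_ge1; have [D_le] := dual_iterate_bounds k_ge1; have := D_le lamstar; have := D_le (lam k).
rewrite dual_opt_fin (dual_iterate_fin k_ge1) (dual_iterate_fin (ltn0Sn k)) !lee_fin.
rewrite multiplier_update // vdotDl vdotZl.
by split => //; lra.
Qed.

Lemma dual_gap_descent k : (1 <= k)%N -> del k.+1 <= del k - s k + eta k.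
Proof. by move=> /dual_iterate_real_bounds[d_le _ d_next_ge _]; rewrite /fhat in d_le; lra. Qed.

Lemma dual_gap_fejer k : (1 <= k)%N -> del k.+1 <= a k - a k.+1 + eta k.
Proof.
move=> k_ge1; have [_ _ d_next_ge dstar_le] := dual_iterate_real_bounds k_ge1.
have -> : a k - a k.+1 = vdot lamstar (r k) - vdot (lam k) (r k) - s k.
  rewrite -vdotBl multiplier_update // opprD addrA; move: (lamstar - lam k) (r k) => w v.
  by rewrite vdot_sqrB !(vdotZl, vdotZr); field; rewrite gt_eqF.
by rewrite /fhat in dstar_le; lra.
Qed.

Lemma objective_gap_le k : (1 <= k)%N ->
  `|Fx k - dstar| <= `|vdot (lam k) (r k)| + `|vdot lamstar (r k)| + s k + eta k.
Proof.
move=> k_ge1; have [_ d_ge _ dstar_le] := dual_iterate_real_bounds k_ge1.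
have d_le := dual_iterate_le_opt k_ge1; rewrite /fhat in d_ge dstar_le.
have s_ge0 : 0 <= s k by rewrite mulr_ge0 ?vdot_ge0 // divr_ge0 // ltW.
have n1 : - vdot (lam k) (r k) <= `|vdot (lam k) (r k)| by rewrite -normrN ler_norm.
have n2 : vdot lamstar (r k) <= `|vdot lamstar (r k)| by exact: ler_norm.
have n3 : 0 <= `|vdot lamstar (r k)| by exact: normr_ge0.
have n4 : 0 <= `|vdot (lam k) (r k)| by exact: normr_ge0.
have eta_ge0 : 0 <= eta k by rewrite divr_ge0 // ltW.
have upper : Fx k - dstar <=
  `|vdot (lam k) (r k)| + `|vdot lamstar (r k)| + s k + eta k by lra.
have lower : - (`|vdot (lam k) (r k)| + `|vdot lamstar (r k)| + s k + eta k) <=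
  Fx k - dstar by lra.
by rewrite ler_norml lower upper.
Qed.

Lemma dual_gap_ge0 k : (1 <= k)%N -> 0 <= del k.
Proof. by move=> /dual_iterate_le_opt; rewrite subr_ge0. Qed.

Lemma multiplier_gap_ge0 k : 0 <= a k.
Proof. by rewrite divr_ge0 ?vdot_ge0 // mulr_ge0 // ltW. Qed.

Lemma residual_ge0 k : 0 <= s k.
Proof. by rewrite mulr_ge0 ?vdot_ge0 // divr_ge0 // ltW. Qed.

Lemma IAL_gap_residual_rate : exists2 c, 0 <= c & forall k, (2 <= k)%N ->
  k%:R * del k <= c /\ k%:R * vdot (r k) (r k) <= c.
Proof.
have rate := @gap_residual_rate R sigma (fun k => del k) (fun k => a k) (fun k => s k)
  (ltW sigma_gt0) dual_gap_ge0 multiplier_gap_ge0 residual_ge0 dual_gap_descent dual_gap_fejer.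
set c0 := 2 * (a 1 + 3 * sigma) in rate.
have c0_ge0 : 0 <= c0 by rewrite mulr_ge0 // addr_ge0 ?multiplier_gap_ge0 // mulr_ge0 // ltW.
exists (c0 + 2 / beta * (c0 + sigma)).
  by rewrite addr_ge0 // mulr_ge0 ?divr_ge0 ?addr_ge0 // ltW.
move=> k k_ge2; have [/= gap res] := rate k k_ge2.
have res_ge0 : 0 <= 2 / beta * (c0 + sigma).
  by rewrite mulr_ge0 ?divr_ge0 ?addr_ge0 // ltW.
split; first by apply: le_trans gap _; rewrite lerDl.
apply: le_trans (ler_wpDl c0_ge0 (lexx _)).
have -> : k%:R * vdot (r k) (r k) = 2 / beta * (k%:R * s k).
  by field; rewrite gt_eqF.
by rewrite ler_wpM2l // divr_ge0 // ltW.
Qed.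

Lemma IAL_multiplier_bounded : exists2 U, vdot lamstar lamstar <= U &
  forall k, (1 <= k)%N -> vdot (lam k) (lam k) <= U.
Proof.
have a_le := @fejer_bounded R sigma (fun k => del k) (fun k => a k)
  (ltW sigma_gt0) dual_gap_ge0 dual_gap_fejer.
exists (2 * vdot lamstar lamstar + 4 * beta * (a 1 + 2 * sigma)).
  have : 0 <= beta * a 1 by rewrite mulr_ge0 ?multiplier_gap_ge0 // ltW.
  have : 0 <= beta * sigma by rewrite mulr_ge0 // ltW.
  have := vdot_ge0 lamstar; lra.
move=> k k_ge1; apply: le_trans (vdot_le_sqrB lamstar (lam k)) _.
have := ler_wpM2l (ltW beta_gt0) (a_le k k_ge1) => /=.
have -> : beta * a k = vdot (lamstar - lam k) (lamstar - lam k) / 2.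
  by field; rewrite gt_eqF.
lra.
Qed.

Lemma IAL_rates : exists C, forall k, (2 <= k)%N ->
  [/\ `|del k| <= C / k%:R, vdot (r k) (r k) <= C / k%:R & `|Fx k - dstar| <= C / Num.sqrt k%:R].
Proof.
have [c c_ge0 rate] := IAL_gap_residual_rate.
have [U lamstar_le lam_le] := IAL_multiplier_bounded.
exists (U + c + beta * c + sigma) => k k_ge2.
have k_ge1 : (1 <= k)%N by exact: ltnW.
have K_ge1 : 1 <= k%:R :> R by rewrite ler1n.
have K_gt0 : 0 < k%:R :> R by rewrite ltr0n.
have [gap res] := rate k k_ge2.
have U_ge0 : 0 <= U := le_trans (vdot_ge0 _) lamstar_le.
have bc_ge0 : 0 <= beta * c by rewrite mulr_ge0 // ltW.
have c_le : c <= U + c + beta * c + sigma by have := ltW sigma_gt0; lra.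
have cK_le : c / k%:R <= (U + c + beta * c + sigma) / k%:R.
  by apply: ler_wpM2r => //; rewrite invr_ge0 ltW.
have gap' : del k <= c / k%:R by rewrite ler_pdivlMr // mulrC.
have res' : vdot (r k) (r k) <= c / k%:R by rewrite ler_pdivlMr // mulrC.
split; last 1 [apply: le_trans (objective_gap_le k_ge1) _].
- by rewrite ger0_norm ?dual_gap_ge0 //; exact: le_trans gap' cK_le.
- exact: le_trans res' cK_le.
set q := Num.sqrt k%:R; have q_gt0 : 0 < q by rewrite sqrtr_gt0.
have young u : vdot u u <= U -> 2 * `|vdot u (r k)| <= (U + c) / q.
  move=> u_le; apply: le_trans (vdot_young_sqrt u (r k) K_gt0) _.
  by apply: ler_wpM2r; [rewrite invr_ge0 ltW | exact: lerD].
have y1 := young _ (lam_le k k_ge1); have y2 := young _ lamstar_le.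
have res_q : beta * vdot (r k) (r k) <= beta * (c / q).
  by apply: ler_wpM2l; [exact: ltW | exact: le_trans res' (ler_div_sqrt K_ge1 c_ge0)].
have eta_q : eta k <= sigma / q.
  apply: le_trans (ler_div_sqrt K_ge1 (ltW sigma_gt0)).
  apply: ler_wpM2l; first exact: ltW.
  by rewrite lef_pV2 ?posrE ?exprn_gt0 // expr2 ler_peMl // ltW.
have : 0 <= beta * c / q by rewrite divr_ge0 // ltW.
lra.
Qed.

End IAL.

Theorem corollary1 (R : realType) (m n : nat) (A : 'M[R]_(m, n)) (b : 'cV[R]_m)
  (f : 'cV[R]_n -> R) (gf : 'cV[R]_n -> 'cV[R]_n) (g : 'cV[R]_n -> \bar R)
  (beta sigma : R) (xstar : 'cV[R]_n) (lamstar : 'cV[R]_m)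
  (x : nat -> 'cV[R]_n) (lam : nat -> 'cV[R]_m) :
  convex_fun f -> has_gradient f gf -> lipschitz_map gf ->
  proper_efun g -> convex_efun g -> closed_efun g -> bounded_dom g ->
  0 < beta ->
  (* x* is an optimal solution of min F(x) s.t. Ax = b *)
  A *m xstar = b ->
  (forall z, A *m z = b -> (Fobj f g xstar <= Fobj f g z)%E) ->
  (* lambda* maximizes d, with d(lambda* ) = F(x* ) *)
  (forall l, (dualfun f g A b beta l <= dualfun f g A b beta lamstar)%E) ->
  dualfun f g A b beta lamstar = Fobj f g xstar ->
  0 < sigma ->
  IAL_iterates f gf g A b beta (fun k => sigma / (k%:R ^+ 2)) x lam ->
  exists (C : R) (K : nat), forall k : nat, (K <= k)%N ->
    [/\ (`|dualfun f g A b beta lamstar - dualfun f g A b beta (lam k)| <= (C / k%:R)%:E)%E,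
        vdot (A *m x k.+1 - b) (A *m x k.+1 - b) <= C / k%:R
      & (`|Fobj f g (x k.+1) - Fobj f g xstar| <= (C / Num.sqrt k%:R)%:E)%E].
Proof.
move=> f_convex f_grad _ [g_ninfty _] _ _ _ beta_gt0 _ _ lamstar_max dstarE sigma_gt0 iterates.
have [C rates] := IAL_rates f_convex f_grad g_ninfty beta_gt0 sigma_gt0 lamstar_max iterates.
exists C, 2%N => k k_ge2; have k_ge1 : (1 <= k)%N by exact: ltnW.
have [gap res obj] := rates k k_ge2.
have dstar_fin := dual_opt_fin f_convex f_grad g_ninfty beta_gt0 lamstar_max iterates.
have d_fin := dual_iterate_fin f_convex f_grad g_ninfty beta_gt0 iterates k_ge1.
have gx_fin := iterate_g_fin g_ninfty iterates k_ge1.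
split => //; first by rewrite dstar_fin d_fin -EFinB abse_EFin lee_fin.
by rewrite -dstarE dstar_fin /Fobj gx_fin -EFinN -!EFinD abse_EFin lee_fin.
Qed.
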